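(* For any $\alpha, \varepsilon \in (0,1]$ there exists $n_0$ such that for all $n \geq n_0$ the following holds. Let $G$ be an $n$-vertex graph with $\alpha \binom{n}{2}$ edges. Then \[\operatorname{ssp}(G) \geq (\sqrt{3 \alpha + 1} - 1 - \varepsilon)n.\]
   Context: A family $\mathcal{P}$ of paths in a graph $G$ is strong-separating if for every ordered pair of distinct edges $e,f$ of $G$ there is a path in $\mathcal{P}$ containing $e$ but not $f$; $\operatorname{ssp}(G)$ is the minimum size of such a family. *)

From HB Require Import structures.
From mathcomp Require Import all_boot all_order all_algebra.
From mathcomp Require Export reals.
Set Implicit Arguments. Unset Strict Implicit. Unset Printing Implicit Defensive.

Section Graphs.
Variable T : finType.

(* A simple graph on T is a symmetric irreflexive relation G : rel T.
   Edges are unordered pairs {x,y}, represented as 2-element sets. *)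
Definition edges (G : rel T) : {set {set T}} :=
  [set [set p.1; p.2] | p in [pred p : T * T | G p.1 p.2]].

Definition is_gpath (G : rel T) (p : seq T) : bool :=
  if p is x :: q then path G x q && uniq p else false.

Definition path_edges (p : seq T) : {set {set T}} :=
  [set [set q.1; q.2] | q in [pred q | q \in zip p (behead p)]].

Definition strong_separating (G : rel T) (P : seq (seq T)) : Prop :=
  (forall p, p \in P -> is_gpath G p) /\
  forall e f, e \in edges G -> f \in edges G -> e != f ->
    exists2 p, p \in P & (e \in path_edges p) && (f \notin path_edges p).

End Graphs.

(* Let [I e] be the set of (indices of) paths of the family through the edge [e].
   Strong separation makes [I] injective on edges.  Only [1 + k + 'C(k, 2)] sets
   of indices have fewer than three elements, so [\sum_e #|I e|] is at least
   [3 |E| - 3 - 2k - 'C(k, 2)], while double counting bounds it by [k n], a path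
   having fewer than [n] edges.  With [|E| = alpha n (n - 1) / 2] this reads
   [(n + k)^2 >= (3 alpha + 1) n^2 - O(n)]. *)

From mathcomp Require Import all_boot all_order all_algebra.
From mathcomp Require Import zify lra.
From mathcomp Require Import reals.

Set Implicit Arguments.
Unset Strict Implicit.
Unset Printing Implicit Defensive.

Import Order.TTheory GRing.Theory Num.Theory.

Section SetFamilies.
Variable T : finType.

Lemma sum_card_eq (j : nat) : \sum_(A : {set T}) (#|A| == j) = 'C(#|T|, j).
Proof.
rewrite -big_mkcond /= sum1dep_card -card_draws.
by apply: eq_card => A; rewrite inE.
Qed.

Lemma sum_subn3_card :
  \sum_(A : {set T}) (3 - #|A|) = 3 + 2 * #|T| + 'C(#|T|, 2).
Proof.
have subn3E m : 3 - m = (m == 0) * 3 + (m == 1) * 2 + (m == 2).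
  by case: m => [|[|[|m]]].
under eq_bigr do rewrite subn3E.
rewrite !big_split /= -!big_distrl /= !sum_card_eq bin0 bin1.
by rewrite mul1n [#|T| * 2]mulnC.
Qed.

(* Charge each [e] the deficit [3 - #|F e|]; by injectivity the total charge
   is at most the deficit summed over all subsets of [T]. *)
Lemma injective_family_card (I : finType) (E : {set I}) (F : I -> {set T}) :
  {in E &, injective F} ->
  3 * #|E| <= 3 + 2 * #|T| + 'C(#|T|, 2) + \sum_(e in E) #|F e|.
Proof.
move=> F_inj.
apply: (@leq_trans (\sum_(e in E) (#|F e| + (3 - #|F e|)))).
  by rewrite mulnC -sum_nat_const; apply: leq_sum => e _; lia.
rewrite big_split /= [leqRHS]addnC leq_add2l -sum_subn3_card.
rewrite -(big_imset (fun A : {set T} => 3 - #|A|) F_inj) /=.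
rewrite [X in _ <= X](bigID (mem (F @: E))) /=.
exact: leq_addr.
Qed.

Lemma sum_card_incidence (B : finType) (k : nat) (S : 'I_k -> {set B}) (E : {set B}) :
  \sum_(e in E) #|[set i | e \in S i]| = \sum_(i < k) #|E :&: S i|.
Proof.
transitivity (\sum_(e in E) \sum_(i < k) (e \in S i)).
  apply: eq_bigr => e _; rewrite -sum1_card big_mkcond.
  by apply: eq_bigr => i _; rewrite inE.
rewrite exchange_big; apply: eq_bigr => i _.
rewrite -sum1_card big_mkcond [RHS]big_mkcond; apply: eq_bigr => e _.
by rewrite in_setI; case: (e \in E); case: (e \in S i).
Qed.

End SetFamilies.

Section PathFamilies.
Variables (T : finType) (G : rel T).

Lemma card_path_edges (p : seq T) : #|path_edges p| <= (size p).-1.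
Proof.
apply: leq_trans (leq_imset_card _ _) _.
rewrite (@eq_card _ _ (mem (zip p (behead p)))) // (leq_trans (card_size _)) //.
by rewrite size_zip size_behead geq_minr.
Qed.

Lemma gpath_card_path_edges (p : seq T) : is_gpath G p -> #|path_edges p| < #|T|.
Proof.
case: p => [//|x q] /andP[_ p_uniq].
apply: leq_ltn_trans (card_path_edges _) _.
by rewrite /= -[(size q).+1]/(size (x :: q)) -(card_uniqP p_uniq) max_card.
Qed.

Definition path_incidence (P : seq (seq T)) (e : {set T}) : {set 'I_(size P)} :=
  [set i : 'I_(size P) | e \in path_edges (nth [::] P i)].

Lemma strong_separating_incidence_inj (P : seq (seq T)) :
  strong_separating G P -> {in edges G &, injective (path_incidence P)}.
Proof.
case=> _ separating e f e_edge f_edge same_incidence.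
apply/eqP; apply: contraT => e_neq_f.
have [p p_in /andP[e_p f_notin_p]] := separating e f e_edge f_edge e_neq_f.
have p_idx : index p P < size P by rewrite index_mem.
have : Ordinal p_idx \in path_incidence P e by rewrite inE /= nth_index.
by rewrite same_incidence inE /= nth_index // (negbTE f_notin_p).
Qed.

Lemma strong_separating_card_edges (P : seq (seq T)) : strong_separating G P ->
  3 * #|edges G| <= 3 + 2 * size P + 'C(size P, 2) + size P * #|T|.
Proof.
move=> sepP; have [gpathP _] := sepP.
apply: leq_trans (injective_family_card (strong_separating_incidence_inj sepP)) _.
rewrite card_ord leq_add2l sum_card_incidence.
rewrite -[X in _ <= X * _]card_ord -sum_nat_const leq_sum // => i _.
rewrite (leq_trans (subset_leq_card (subsetIr _ _))) // ltnW //.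
by apply/gpath_card_path_edges/gpathP/mem_nth.
Qed.

End PathFamilies.

Local Open Scope ring_scope.

Lemma natr_bin2 (R : pzRingType) (n : nat) : 2 * 'C(n, 2)%:R = n%:R * (n%:R - 1) :> R.
Proof.
rewrite -[2]/(2%:R) -natrM -mul_bin_diag bin1 natrM.
by case: n => [|n]; rewrite ?mul0r // -natr1 addrK.
Qed.

Lemma sqrt_lower_bound (R : rcfType) (alpha eps x y : R) :
  0 < alpha <= 1 -> 0 < eps <= 1 -> 13 < eps * x -> 0 <= y ->
  3 * alpha * x * (x - 1) <= y ^+ 2 + 2 * x * y + 4 * y + 6 ->
  (Num.sqrt (3 * alpha + 1) - 1 - eps) * x <= y.
Proof.
move=> /andP[alpha_gt0 alpha_le1] /andP[eps_gt0 eps_le1] eps_x y_ge0 quad.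
set s := Num.sqrt (3 * alpha + 1).
have s_sq : s ^+ 2 = 3 * alpha + 1 by rewrite sqr_sqrtr //; lra.
have s_ge1 : 1 <= s by rewrite -sqrtr1 ler_wsqrtr //; lra.
have s_le2 : s <= 2.
  by rewrite -(ger0_norm (_ : 0 <= 2 :> R)) // -sqrtr_sqr ler_wsqrtr //; lra.
have x_ge1 : 1 <= x by nra.
rewrite leNgt; apply/negP => y_small.
have y_lt_x : y < x by nra.
(* [(x + y)^2 < ((s - eps) x)^2 <= (s^2 - eps) x^2] contradicts [quad] once [eps x > 13]. *)
have sum_sq : (x + y) ^+ 2 < ((s - eps) * x) ^+ 2 by nra.
have : eps * x * x < 13 * x by nra.
nra.
Qed.

Theorem proposition2p2 (R : realType) (alpha eps : R) :
  0 < alpha <= 1 -> 0 < eps <= 1 ->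
  exists n0 : nat, forall n : nat, (n0 <= n)%N ->
    forall G : rel 'I_n, symmetric G -> irreflexive G ->
    (#|edges G|%:R = alpha * 'C(n, 2)%:R :> R) ->
    forall P : seq (seq 'I_n), strong_separating G P ->
      (Num.sqrt (3 * alpha + 1) - 1 - eps) * n%:R <= (size P)%:R.
Proof.
move=> alpha_range eps_range; have /andP[eps_gt0 _] := eps_range.
exists (Num.truncn (13 / eps)).+1 => n n_large G _ _ card_edges P sepP.
apply: sqrt_lower_bound => //.
- rewrite mulrC -ltr_pdivrMr //; apply: lt_le_trans (truncnS_gt _) _.
  by rewrite ler_nat.
- have := strong_separating_card_edges sepP.
  rewrite card_ord -(ler_nat R) !natrD !natrM card_edges -mulrA -natr_bin2.
  have := natr_bin2 R (size P); have := ler0n R (size P).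
  lra.
Qed.
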